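(* Let $\mathcal G\subseteq\mathcal F$ be a sub-$\sigma$-algebra and let $Z\in L_p(\Omega,\mathcal F,P)$ be such that the conditional distributionally robust functional $\mathcal R_{|\mathcal G}(Z)$ belongs to $L_p(\Omega,\mathcal F,P)$. Then $$\mathcal R(Z)\le \mathcal R\big(\mathcal R_{|\mathcal G}(Z)\big).$$
   Context: Let $(\Omega,\mathcal F,P)$ be a probability space, $p\in[1,\infty)$, $1/p+1/q=1$, and $\mathcal Z=L_p(\Omega,\mathcal F,P)$. Let $\mathfrak M$ be a nonempty set of probability measures $Q$ on $(\Omega,\mathcal F)$ with $Q\ll P$ and $dQ/dP\in L_q(\Omega,\mathcal F,P)$, and define $\mathcal R(Z)=\sup_{Q\in\mathfrak M}\mathbb E_Q[Z]$ for $Z\in\mathcal Z$ (assumed finite). Relations $X\preceq Y$ between random variables mean $X\le Y$ $P$-almost surely; essential suprema/infima are taken with respect to $P$. For a probability measure $Q$ and sub-$\sigma$-algebra $\mathcal G$, $\operatorname{ess\,inf}\mathbb E_{Q|\mathcal G}[Z]$ denotes the essential infimum (w.r.t. $P$) of the set of all versions of the conditional expectation of $Z$ given $\mathcal G$ under $Q$ (i.e., all $\mathcal G$-measurable $Y$ with $\int_B Y\,dQ=\int_B Z\,dQ$ for all $B\in\mathcal G$); it equals $-\infty$ on sets $A\in\mathcal G$ with $Q(A)=0<P(A)$. The conditional distributionally robust functional $\mathcal R_{|\mathcal G}(Z)$ is the $\mathcal G$-measurable extended-real function (unique up to $P$-null sets) such that (i) $\operatorname{ess\,inf}\mathbb E_{Q|\mathcal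 G}[Z]\preceq \mathcal R_{|\mathcal G}(Z)$ for every $Q\in\mathfrak M$, and (ii) whenever $Y$ is $\mathcal G$-measurable with $\operatorname{ess\,inf}\mathbb E_{Q|\mathcal G}[Z]\preceq Y$ for all $Q\in\mathfrak M$, then $\mathcal R_{|\mathcal G}(Z)\preceq Y$. That is, $\mathcal R_{|\mathcal G}(Z)=\operatorname{ess\,sup}_{Q\in\mathfrak M}\mathbb E_{Q|\mathcal G}[Z]$. *)

From HB Require Import structures.
From mathcomp Require Import all_boot all_order all_algebra.
From mathcomp Require Import all_classical all_reals all_analysis.
From mathcomp Require Import measurable_realfun.
Set Implicit Arguments.
Unset Strict Implicit.
Unset Printing Implicit Defensive.
Import Order.TTheory GRing.Theory Num.Theory.

Local Open Scope classical_set_scope.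
Local Open Scope ring_scope.
Local Open Scope ereal_scope.

Section conditional_DR.
Context {d : measure_display} {T : measurableType d} {R : realType}.

Definition is_sub_sigma_algebra (G : set (set T)) :=
  sigma_algebra setT G /\ G `<=` measurable.

Definition G_measurable (G : set (set T)) (f : T -> \bar R) :=
  forall B : set (\bar R), measurable B -> G (f @^-1` B).

Definition in_Lp (P : {measure set T -> \bar R}) (p : \bar R) (f : T -> \bar R) :=
  measurable_fun setT f /\ Lnorm P p f < +oo.

Definition admissible (P : {measure set T -> \bar R}) (p : R)
    (Q : probability T R) :=
  Q `<< P /\
  exists h : T -> R, measurable_fun setT h /\
    (forall A, measurable A -> Q A = \int[P]_(x in A) (h x)%:E) /\
    in_Lp P (hoelder_conjugate p%:E) (EFin \o h).

Definition DR (M : set (probability T R)) (Z : T -> \bar R) : \bar R :=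
  ereal_sup [set \int[Q]_x Z x | Q in M].

Definition cond_exp_version (Q : {measure set T -> \bar R})
    (G : set (set T)) (Z : T -> R) (Y : T -> R) :=
  G_measurable G (EFin \o Y) /\ Q.-integrable setT (EFin \o Y) /\
  forall B, G B -> \int[Q]_(x in B) (Y x)%:E = \int[Q]_(x in B) (Z x)%:E.

Definition is_ess_inf (P : {measure set T -> \bar R})
    (S : set (T -> \bar R)) (X : T -> \bar R) :=
  [/\ measurable_fun setT X,
      (forall Y, S Y -> {ae P, forall x, X x <= Y x}) &
      (forall W, measurable_fun setT W ->
         (forall Y, S Y -> {ae P, forall x, W x <= Y x}) ->
         {ae P, forall x, W x <= X x})].

Definition is_ess_inf_cond_exp (P : {measure set T -> \bar R})
    (Q : {measure set T -> \bar R}) (G : set (set T)) (Z : T -> R)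
    (X : T -> \bar R) :=
  is_ess_inf P [set EFin \o Y | Y in cond_exp_version Q G Z] X.

(* X = R_{|G}(Z) = ess sup_{Q in M} E_{Q|G}[Z], via properties (i), (ii) *)
Definition is_cond_DR (P : {measure set T -> \bar R})
    (M : set (probability T R)) (G : set (set T)) (Z : T -> R)
    (X : T -> \bar R) :=
  [/\ G_measurable G X,
      (forall Q, M Q -> forall E, is_ess_inf_cond_exp P Q G Z E ->
         {ae P, forall x, E x <= X x}) &
      (forall Y, G_measurable G Y ->
         (forall Q, M Q -> forall E, is_ess_inf_cond_exp P Q G Z E ->
            {ae P, forall x, E x <= Y x}) ->
         {ae P, forall x, X x <= Y x})].

End conditional_DR.

From HB Require Import structures.
From mathcomp Require Import all_boot all_order all_algebra.
From mathcomp Require Import all_classical all_reals all_analysis.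
From mathcomp Require Import measurable_realfun.
Set Implicit Arguments.
Unset Strict Implicit.
Unset Printing Implicit Defensive.
Import Order.TTheory GRing.Theory Num.Theory.
Local Open Scope classical_set_scope.
Local Open Scope ring_scope.
Local Open Scope ereal_scope.

(* It suffices to show E_Q[Z] <= E_Q[X] for every Q in M, where X is the
   conditional functional R_{|G}(Z); then E_Q[Z] <= E_Q[X] <= R(X), and we
   take the supremum over Q.  Fix Q in M.
   - Z is Q-integrable, since E_Q|Z| <= R(|Z|) < +oo.
   - A version Y of E_Q[Z | G] is obtained from the Radon-Nikodym theorem
     applied on the trace of Q on G; any two versions agree off a
     G-measurable Q-null set.
   - The essential infimum of all versions is computed explicitly: there is
     a G-measurable Q-null set N that is maximal up to P-null sets, versions
     are arbitrary on N, hence the essential infimum is E := -oo on N and Y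
     off N.  In particular E = Y Q-almost everywhere.
   - By property (i) of X, E <= X P-a.e., hence Q-a.e. because Q << P, and
     E_Q[Z] = E_Q[Y] = E_Q[E] <= E_Q[X]. *)

Section measure_facts.
Context {d : measure_display} {T : measurableType d} {R : realType}.

Lemma null_dominates_ae (mu nu : {measure set T -> \bar R}) (A : T -> Prop) :
  nu `<< mu -> {ae mu, forall x, A x} -> {ae nu, forall x, A x}.
Proof.
move=> /null_content_dominatesP numu [N [mN muN NA]].
by exists N; split => //; exact: numu.
Qed.

Lemma ae_le_integral (mu : {measure set T -> \bar R}) (f g : T -> \bar R) :
  measurable_fun setT f -> measurable_fun setT g ->
  {ae mu, forall x, f x <= g x} -> \int[mu]_x f x <= \int[mu]_x g x.
Proof.
move=> mf mg fg; rewrite integralE [leRHS]integralE; apply: leeB.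
- apply: ae_ge0_le_integral => //;
    [exact: measurable_funepos|exact: measurable_funepos|].
  apply: filterS fg => x fgx _.
  by apply: (@funepos_le _ _ [set x] f g); [move=> y /set_mem ->|exact/mem_set].
- apply: ae_ge0_le_integral => //;
    [exact: measurable_funeneg|exact: measurable_funeneg|].
  apply: filterS fg => x fgx _.
  by apply: (@funeneg_le _ _ [set x] f g); [move=> y /set_mem ->|exact/mem_set].
Qed.

Lemma in_Lp_abs (mu : {measure set T -> \bar R}) (p : \bar R) (Y : T -> R) :
  in_Lp mu p (EFin \o Y) -> in_Lp mu p (EFin \o (fun x => `|Y x|%R)).
Proof.
move=> [mY LY]; split.
  apply/measurable_EFinP; apply: measurableT_comp (@normr_measurable R setT) _.
  exact/measurable_EFinP.
by rewrite (_ : Lnorm mu p _ = Lnorm mu p (abse \o (EFin \o Y))) // Lnorm_abse.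
Qed.

End measure_facts.

Section maximal_null_set.
Context {d : measure_display} {T : measurableType d} {R : realType}.
Variables (G : set (set T)) (HG : is_sub_sigma_algebra G).
Variable P : {finite_measure set T -> \bar R}.
Variable Q : {measure set T -> \bar R}.

Lemma null_G_bigcup (F : nat -> set T) :
  (forall n, G (F n) /\ Q (F n) = 0) ->
  G (\bigcup_n F n) /\ Q (\bigcup_n F n) = 0.
Proof.
move=> hF; have [_ _ GU] := HG.1.
have GF : G (\bigcup_n F n) by apply: GU => n; case: (hF n).
split => //; apply/eqP; rewrite eq_le measure_ge0 andbT.
have mF n : d.-measurable (F n) by apply: HG.2; case: (hF n).
have mUF : d.-measurable (\bigcup_n F n) := HG.2 _ GF.
apply: le_trans (measure_sigma_subadditive Q mF mUF (@subset_refl _ _)) _.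
by rewrite eseries0// => n _ _; case: (hF n).
Qed.

(* N is a countable union of such null sets whose P-measures approach the
   supremum of the P-measures of all of them. *)
Lemma maximal_null_set : exists N, [/\ G N, Q N = 0 &
  forall B, G B -> Q B = 0 -> P (B `\` N) = 0].
Proof.
have [G0 _ _] := HG.1.
set S := [set P B | B in [set B | G B /\ Q B = 0]].
have S_fin : ereal_sup S \is a fin_num.
  rewrite ge0_fin_numE; last by apply: ereal_sup_ubound; exists set0;
    rewrite ?measure0.
  apply: (le_lt_trans (y := P setT)); last by rewrite ltey_eq fin_num_measure.
  by apply: ge_ereal_sup => _ [B [GB _] <-]; apply: le_measure;
    rewrite ?inE//; exact: HG.2.
have /choice [B hB] : forall n : nat, exists B, (G B /\ Q B = 0) /\
    ereal_sup S - (n.+1%:R^-1)%:E < P B.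
  move=> n; have [_ [B nullB <-] ?] := ub_ereal_sup_adherent
    (S := S) (e := n.+1%:R^-1) ltac:(by rewrite invr_gt0) S_fin.
  by exists B.
set N := \bigcup_n B n.
have [GN QN] := null_G_bigcup (fun n => (hB n).1).
have mN : d.-measurable N := HG.2 _ GN.
have sup_le_PN : ereal_sup S <= P N.
  apply/lee_subgt0Pr => e e0; have [k] := ltr_add_invr e0; rewrite add0r => ke.
  apply: le_trans (_ : ereal_sup S - (k.+1%:R^-1)%:E <= _).
    by rewrite leeB// lee_fin ltW.
  apply: le_trans (ltW (hB k).2) _; apply: le_measure; rewrite ?inE//.
  - exact: HG.2 (hB k).1.1.
  - exact: bigcup_sup.
exists N; split => // C GC QC.
have mC : d.-measurable C := HG.2 _ GC.
have [GNC QNC] : G (N `|` C) /\ Q (N `|` C) = 0.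
  by rewrite -bigcup2E; apply: null_G_bigcup => -[|[|n]] //=; rewrite measure0.
have PNC : P (N `|` C) = P N + P (C `\` N).
  rewrite -measureU; [|by []|exact: measurableD|].
    by rewrite setDE setUIr setUCr setIT.
  by rewrite setDE setICA setICr setI0.
apply/eqP; rewrite eq_le measure_ge0 andbT.
rewrite -(@leeD2lE _ (P N)) ?fin_num_measure// adde0 -PNC.
by apply: le_trans sup_le_PN; apply: ereal_sup_ubound; exists (N `|` C).
Qed.

End maximal_null_set.

Section conditional_expectation.
Context {d : measure_display} {T : measurableType d} {R : realType}.
Variables (G : set (set T)) (HG : is_sub_sigma_algebra G).

Local Notation TG := (g_sigma_algebraType G).

Lemma measurable_TGE (A : set TG) : measurable A = G A.
Proof. by rewrite (measurable_g_measurableTypeE HG.1). Qed.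

Lemma measurable_TG (A : set TG) : measurable A -> d.-measurable (A : set T).
Proof. by rewrite measurable_TGE; exact: HG.2. Qed.

Lemma G_measurableP (f : T -> \bar R) :
  G_measurable G f <-> measurable_fun [set: TG] (f : TG -> \bar R).
Proof.
split => [Gf _ B mB|mf B mB]; first by rewrite setTI measurable_TGE; exact: Gf.
by rewrite -measurable_TGE; have := mf measurableT B mB; rewrite setTI.
Qed.

Lemma measurable_toG : measurable_fun [set: T] (fun x : T => (x : TG)).
Proof. by move=> _ B mB; rewrite setTI; exact: measurable_TG. Qed.

Definition toG : {mfun T >-> TG} :=
  MeasurableFun.Pack (MeasurableFun.Class
    (isMeasurableFun.Build _ _ _ _ _ measurable_toG)).

Variables (Q : probability T R) (Z : T -> R).
Hypothesis intZ : Q.-integrable setT (EFin \o Z).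

Definition QG := distribution Q toG.

Definition nuZ : set TG -> \bar R :=
  fun A => \int[Q]_(x in (A : set T)) (Z x)%:E.

Let nuZ0 : nuZ set0 = 0. Proof. by rewrite /nuZ integral_set0. Qed.

Let nuZ_fin A : measurable A -> nuZ A \is a fin_num.
Proof.
move=> mA; have mA' := measurable_TG mA.
by apply: integrable_fin_num => //; exact: (integrableS measurableT).
Qed.

Let nuZ_sigma_additive : semi_sigma_additive nuZ.
Proof.
move=> F mF tF mUF.
exact: (@charge_semi_sigma_additive _ _ _ (induced_charge intZ) F
  (fun n => measurable_TG (mF n)) tF (measurable_TG mUF)).
Qed.

HB.instance Definition _ :=
  isCharge.Build _ _ _ nuZ nuZ0 nuZ_fin nuZ_sigma_additive.

Lemma nuZ_dominates : nuZ `<< QG.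
Proof.
apply/null_content_dominatesP => A mA QA.
rewrite /nuZ null_set_integral//; first exact: measurable_TG.
apply: measurable_funTS; exact: (measurable_int _ intZ).
Qed.

Definition condexpE : T -> \bar R := Radon_Nikodym nuZ QG.

Definition condexp : T -> R := fun x => fine (condexpE x).

Lemma condexpEE : EFin \o condexp = condexpE.
Proof.
apply/funext => x /=; rewrite /condexp fineK//.
exact: (Radon_Nikodym_fin_num _ nuZ_dominates).
Qed.

Lemma integrable_condexpE_G : QG.-integrable setT condexpE.
Proof. exact: (Radon_Nikodym_integrable nuZ_dominates). Qed.

Lemma measurable_condexpE_G : measurable_fun [set: TG] condexpE.
Proof. exact: (measurable_int _ integrable_condexpE_G). Qed.

Lemma measurable_condexpE : measurable_fun [set: T] condexpE.
Proof. exact: (measurableT_comp measurable_condexpE_G measurable_toG). Qed.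

Lemma measurable_condexp_G : measurable_fun [set: TG] (condexp : TG -> R).
Proof.
by apply/measurable_EFinP; rewrite condexpEE; exact: measurable_condexpE_G.
Qed.

Lemma integrable_condexpE : Q.-integrable setT condexpE.
Proof.
apply/integrableP; split; first exact: measurable_condexpE.
have /integrableP[_] := integrable_condexpE_G.
rewrite (@ge0_integral_pushforward _ _ T TG R _ measurable_toG Q setT
  (fun x => `|condexpE x|) measurableT
  (measurableT_comp (@abse_measurable R setT) measurable_condexpE_G)) //.
Qed.

Lemma integral_QG (f : T -> \bar R) B : G B ->
  measurable_fun [set: TG] (f : TG -> \bar R) -> Q.-integrable setT f ->
  \int[QG]_(x in (B : set TG)) f x = \int[Q]_(x in B) f x.
Proof.
move=> GB mf intf; have mB : measurable (B : set TG) by rewrite measurable_TGE.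
exact: (@integral_pushforward _ _ T TG R _ measurable_toG Q B f mf
  (integrableS measurableT (measurable_TG mB) (subsetT _) intf) mB).
Qed.

Lemma condexp_version : cond_exp_version Q G Z condexp.
Proof.
rewrite /cond_exp_version condexpEE; split; [|split].
- by apply/G_measurableP; exact: measurable_condexpE_G.
- exact: integrable_condexpE.
- move=> B GB; have mB : measurable (B : set TG) by rewrite measurable_TGE.
  transitivity (\int[Q]_(x in B) condexpE x).
    by apply: eq_integral => x _; rewrite -condexpEE.
  rewrite -integral_QG //;
    [|exact: measurable_condexpE_G|exact: integrable_condexpE].
  by rewrite -Radon_Nikodym_integral //; exact: nuZ_dominates.
Qed.

Lemma version_condexp_ae Y : cond_exp_version Q G Z Y ->
  exists C, [/\ G C, Q C = 0 & forall x, ~ C x -> Y x = condexp x].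
Proof.
move=> [/G_measurableP mY [intY eqY]].
have : ae_eq QG setT condexpE (EFin \o Y : TG -> \bar R).
  apply: integral_ae_eq => //; first exact: integrable_condexpE_G.
  move=> B _ mB; have GB : G B by rewrite -measurable_TGE.
  rewrite -Radon_Nikodym_integral //; last exact: nuZ_dominates.
  by rewrite integral_QG // /nuZ eqY.
case=> C [mC QC sub]; exists C; split => //; first by rewrite -measurable_TGE.
move=> x Cx; apply: EFin_inj; rewrite -[RHS]/((EFin \o condexp) x) condexpEE.
apply: contrapT => ne; apply: Cx; apply: sub => /= /(_ I) /esym; exact: ne.
Qed.

Lemma version_of_ae (Y : T -> R) (C : set T) : G_measurable G (EFin \o Y) ->
  G C -> Q C = 0 -> (forall x, ~ C x -> Y x = condexp x) ->
  cond_exp_version Q G Z Y.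
Proof.
move=> GY GC QC eqC; have mC : d.-measurable C := HG.2 _ GC.
have mY : measurable_fun [set: T] (EFin \o Y).
  exact: measurableT_comp (proj1 (G_measurableP _) GY) measurable_toG.
have mYG : measurable_fun [set: T] (EFin \o condexp).
  by rewrite condexpEE; exact: measurable_condexpE.
have ae B : ae_eq Q B (EFin \o Y) (EFin \o condexp).
  exists C; split => // x /= h; apply: contrapT => Cx; apply: h => _.
  by rewrite eqC.
have [_ [intYG eqYG]] := condexp_version.
split => //; split.
  apply/integrableP; split => //.
  rewrite (ae_eq_integral (fun x => `|(EFin \o condexp) x|)) //.
  - by have /integrableP[] := intYG.
  - exact: measurableT_comp (@abse_measurable R setT) mY.
  - exact: measurableT_comp (@abse_measurable R setT) mYG.
  - by apply: filterS (ae setT) => x h _ /=; case: (h I) => ->.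
move=> B GB; have mB : d.-measurable B := HG.2 _ GB.
rewrite -eqYG // (ae_eq_integral (EFin \o condexp)) //.
- exact: measurable_funTS.
- exact: measurable_funTS.
Qed.

End conditional_expectation.

Section essential_infimum.
Context {d : measure_display} {T : measurableType d} {R : realType}.
Variables (G : set (set T)) (HG : is_sub_sigma_algebra G).
Variables (P : {finite_measure set T -> \bar R}) (Q : probability T R).
Variable Z : T -> R.
Hypothesis intZ : Q.-integrable setT (EFin \o Z).
Variable N : set T.
Hypotheses (GN : G N) (QN : Q N = 0).
Hypothesis maxN : forall B, G B -> Q B = 0 -> P (B `\` N) = 0.

Local Notation Y := (condexp HG intZ).

Definition essinf_condexp : T -> \bar R :=
  fun x => if x \in N then -oo else (Y x)%:E.

Lemma measurable_essinf_condexp : measurable_fun setT essinf_condexp.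
Proof.
apply: measurable_fun_ifT.
- apply: (measurable_fun_bool true).
  by rewrite setTI preimage_mem_true; exact: HG.2.
- exact: measurable_cst.
- by have := measurable_condexpE HG intZ; rewrite -condexpEE.
Qed.

(* It lies below every version, P-a.e.: a version differs from Y only on a
   G-measurable Q-null set, which is P-a.e. contained in N. *)
Lemma essinf_condexp_lower Y' : cond_exp_version Q G Z Y' ->
  {ae P, forall x, essinf_condexp x <= (Y' x)%:E}.
Proof.
move=> /version_condexp_ae[C [GC QC eqC]]; have mC := HG.2 _ GC.
exists (C `\` N); split; [exact: measurableD (HG.2 _ GN)|exact: maxN|].
move=> x /= h; apply: contrapT => hCN; apply: h; rewrite /essinf_condexp.
case: ifPn => [_|/negP]; first exact: leNye.
by rewrite in_setE => Nx; rewrite eqC // => Cx; apply: hCN.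
Qed.

(* On N, versions may be lowered by arbitrary constants, so any P-a.e. lower
   bound of all versions is -oo on N (P-a.e.) and below Y elsewhere. *)
Lemma essinf_condexp_greatest (W : T -> \bar R) :
  (forall Y', cond_exp_version Q G Z Y' ->
     {ae P, forall x, W x <= (Y' x)%:E}) ->
  {ae P, forall x, W x <= essinf_condexp x}.
Proof.
move=> hW; pose Yn (n : nat) x := if x \in N then (Y x - n%:R)%R else Y x.
have vYn n : cond_exp_version Q G Z (Yn n).
  apply: (version_of_ae (HG := HG) (intZ := intZ) _ GN QN); last first.
    by move=> x Nx; rewrite /Yn memNset.
  apply/(G_measurableP HG)/measurable_EFinP; apply: measurable_fun_ifT.
  + apply: (measurable_fun_bool true).
    by rewrite setTI preimage_mem_true measurable_TGE.
  + by apply: measurable_funB => //; exact: measurable_condexp_G.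
  + exact: measurable_condexp_G.
have WY := hW _ (condexp_version HG intZ).
have WYn : {ae P, forall x, forall n, W x <= (Yn n x)%:E}.
  by apply: ae_foralln => n; exact: hW.
apply: filterS2 WY WYn => x WYx WYnx; rewrite /essinf_condexp.
case: ifPn => xN; last exact: WYx.
move: WYnx; rewrite /Yn xN; case: (W x) => [r| |] WYnx; last by [].
  have := WYnx (Num.truncn (Y x - r)).+1.
  rewrite lee_fin lerBrDl -lerBrDr => /(lt_le_trans (truncnS_gt _)).
  by rewrite ltxx.
by have := WYnx 0%N.
Qed.

Lemma is_ess_inf_essinf_condexp :
  is_ess_inf_cond_exp P Q G Z essinf_condexp.
Proof.
split; first exact: measurable_essinf_condexp.
- by move=> _ [Y' vY' <-]; exact: essinf_condexp_lower.
- move=> W _ hW; apply: essinf_condexp_greatest => Y' vY'.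
  exact: hW (ex_intro2 _ _ _ vY' erefl).
Qed.

Lemma essinf_condexp_ae : {ae Q, forall x, essinf_condexp x = (Y x)%:E}.
Proof.
exists N; split => //; first exact: HG.2.
move=> x /= h; apply: contrapT => Nx; apply: h.
by rewrite /essinf_condexp memNset.
Qed.

End essential_infimum.

Section robust_functional.
Context {d : measure_display} {T : measurableType d} {R : realType}.

Lemma DR_integrable (M : set (probability T R)) (Y : T -> R) Q :
  measurable_fun setT Y -> DR M (EFin \o (fun x => `|Y x|%R)) \is a fin_num ->
  M Q -> Q.-integrable setT (EFin \o Y).
Proof.
move=> mY /fin_numPlt/andP[_ DRfin] MQ.
apply/integrableP; split; first exact/measurable_EFinP.
by apply: le_lt_trans DRfin; apply: ereal_sup_ubound; exists Q.
Qed.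

Lemma expectation_le_cond_DR (G : set (set T)) (HG : is_sub_sigma_algebra G)
    (P : {finite_measure set T -> \bar R}) (Q : probability T R)
    (Z : T -> R) (X : T -> \bar R) :
  Q `<< P -> Q.-integrable setT (EFin \o Z) -> measurable_fun setT X ->
  (forall E, is_ess_inf_cond_exp P Q G Z E -> {ae P, forall x, E x <= X x}) ->
  \int[Q]_x (Z x)%:E <= \int[Q]_x X x.
Proof.
move=> QP intZ mX EX.
have [N [GN QN maxN]] := maximal_null_set HG P Q.
have EinfX := EX _ (is_ess_inf_essinf_condexp HG intZ GN QN maxN).
have [_ [_ eqYZ]] := condexp_version HG intZ.
have GT : G setT by have [G0 GC _] := HG.1; have := GC _ G0; rewrite setD0.
rewrite -eqYZ //; apply: ae_le_integral => //.
  by have := measurable_condexpE HG intZ; rewrite -condexpEE.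
apply: filterS2 (essinf_condexp_ae HG intZ GN QN) (null_dominates_ae QP EinfX).
by move=> x <-.
Qed.

End robust_functional.

Theorem proposition3p6 (R : realType) (d : measure_display)
  (T : measurableType d) (P : probability T R) (p : R)
  (M : set (probability T R)) (G : set (set T)) (Z : T -> R)
  (X : T -> \bar R) :
  (1 <= p)%R ->
  M !=set0 ->
  (forall Q, M Q -> admissible P p Q) ->
  (forall Y : T -> R, in_Lp P p%:E (EFin \o Y) ->
     DR M (EFin \o Y) \is a fin_num) ->
  is_sub_sigma_algebra G ->
  in_Lp P p%:E (EFin \o Z) ->
  is_cond_DR P M G Z X ->
  in_Lp P p%:E X ->
  DR M (EFin \o Z) <= DR M X.
Proof.
move=> _ _ adm DR_fin HG LZ [_ X_above _] [mX _].
have intZ Q : M Q -> Q.-integrable setT (EFin \o Z).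
  apply: DR_integrable; first by apply/measurable_EFinP; case: LZ.
  exact/DR_fin/in_Lp_abs.
apply: ge_ereal_sup => _ [Q MQ <-].
apply: le_trans (_ : \int[Q]_x X x <= _).
  exact: (expectation_le_cond_DR (P := P) HG (adm Q MQ).1 (intZ Q MQ) mX
    (X_above Q MQ)).
by apply: ereal_sup_ubound; exists Q.
Qed.
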